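(* Let $f:\mathbb{R}^d\to\mathbb{R}$ be convex and differentiable, and suppose that $\nabla^2f(\boldsymbol x)\preceq L\boldsymbol I$ for all $\boldsymbol x\in B(\boldsymbol x_0,M)$, for some $\boldsymbol x_0\in\mathbb{R}^d$, $0<M\le+\infty$ and $0<L<+\infty$. If $\lambda>\|\nabla f(\boldsymbol x_0)\|_2$, then for all $\boldsymbol x\in B\big(\boldsymbol x_0,\min\{(\lambda-\|\nabla f(\boldsymbol x_0)\|_2)/L,M\}\big)$, $$f(\boldsymbol x)=\inf_{\boldsymbol y\in\mathbb{R}^d}\{f(\boldsymbol y)+\lambda\|\boldsymbol x-\boldsymbol y\|_2\}\qquad\text{and}\qquad\mathop{\mathrm{argmin}}_{\boldsymbol y\in\mathbb{R}^d}\{f(\boldsymbol y)+\lambda\|\boldsymbol x-\boldsymbol y\|_2\}=\{\boldsymbol x\}.$$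
   Context: $B(\boldsymbol x,r)$ is the closed Euclidean ball; $f$ is assumed twice differentiable on $B(\boldsymbol x_0,M)$ so that the Hessian bound makes sense. *)

From HB Require Import structures.
From mathcomp Require Import all_boot all_order all_algebra.
From mathcomp Require Import all_classical all_reals all_analysis.
Set Implicit Arguments. Unset Strict Implicit. Unset Printing Implicit Defensive.
Import Order.TTheory GRing.Theory Num.Theory.
Import numFieldNormedType.Exports.
Local Open Scope classical_set_scope.
Local Open Scope ring_scope.

Section Defs.
Context {R : realType} {d : nat}.

(* Euclidean (l2) norm on R^d (the library's default norm on 'rV is the sup norm). *)
Definition enorm (v : 'rV[R]_d) : R := Num.sqrt (\sum_(i < d) (v ord0 i) ^+ 2).

Definition ebasis (i : 'I_d) : 'rV[R]_d := delta_mx ord0 i.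

Definition grad (f : 'rV[R]_d -> R) (x : 'rV[R]_d) : 'rV[R]_d :=
  \row_(i < d) 'D_(ebasis i) f x.

Definition hessian (f : 'rV[R]_d -> R) (x : 'rV[R]_d) : 'M[R]_d :=
  \matrix_(i < d, j < d) 'D_(ebasis j) (fun y => 'D_(ebasis i) f y) x.

Definition eball (x0 : 'rV[R]_d) (r : \bar R) : set 'rV[R]_d :=
  [set x | ((enorm (x - x0))%:E <= r)%E].

Definition convex_fun (f : 'rV[R]_d -> R) : Prop :=
  forall (x y : 'rV[R]_d) (t : R), 0 <= t -> t <= 1 ->
    f (t *: x + (1 - t) *: y) <= t * f x + (1 - t) * f y.

Definition loewner_le_scalar (A : 'M[R]_d) (L : R) : Prop :=
  forall v : 'rV[R]_d, (v *m A *m v^T) ord0 ord0 <= L * enorm v ^+ 2.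

End Defs.

(* Convexity gives f y >= f z + <grad f z, y - z> for all y, z, and the Hessian
   bound makes grad f L-Lipschitz on the ball (via the mean value theorem, once
   the second differential is known to be symmetric, which is Schwarz's argument
   on second differences).  For x in the smaller ball this yields
   |grad f x| <= |grad f x0| + L |x - x0| <= lam, hence f y + lam |x - y| >= f x.
   Strictness, even on the boundary of the smaller ball, comes from expanding f
   around z = x - mu (x - x0) instead of x: replacing grad f x by grad f z costs
   at most L mu^2 |x - x0|^2, quadratic in mu, while the margin gained,
   mu (lam - |grad f x0|) |x - y|, is linear in mu. *)

From HB Require Import structures.
From mathcomp Require Import all_boot all_order all_algebra.
From mathcomp Require Import all_classical all_reals all_analysis.
From mathcomp Require Import ring lra.
Set Implicit Arguments. Unset Strict Implicit. Unset Printing Implicit Defensive.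
Import Order.TTheory GRing.Theory Num.Theory.
Import numFieldNormedType.Exports.
Local Open Scope classical_set_scope.
Local Open Scope ring_scope.

Lemma psd_form_CauchySchwarz (R : rcfType) (V : lmodType R) (B : V -> V -> R) :
  (forall u v, B u v = B v u) ->
  (forall u v w (t : R), B u (t *: v + w) = t * B u v + B u w) ->
  (forall u, 0 <= B u u) ->
  forall a b, B a b <= Num.sqrt (B a a) * Num.sqrt (B b b).
Proof.
move=> BC BlinR Bpsd a b.
have quad t : 0 <= t ^+ 2 * B b b + 2 * t * B a b + B a a.
  have := Bpsd (t *: b + a); rewrite BlinR !(BC (t *: b + a)) !BlinR (BC a b).
  by congr (_ <= _); ring.
suff sq : B a b ^+ 2 <= B a a * B b b.
  rewrite -sqrtrM // (le_trans (ler_norm _)) // -sqrtr_sqr ler_sqrt //.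
  exact: mulr_ge0.
have [bb_gt0|bb_le0] := ltP 0 (B b b).
  have := quad (- B a b / B b b).
  have -> : (- B a b / B b b) ^+ 2 * B b b + 2 * (- B a b / B b b) * B a b + B a a
      = B a a - B a b ^+ 2 / B b b by field; exact: lt0r_neq0.
  by rewrite subr_ge0 ler_pdivrMr.
have bb0 : B b b = 0 by apply/le_anti; rewrite bb_le0 Bpsd.
have [->|ab_neq0] := eqVneq (B a b) 0; first by rewrite bb0 mulr0 expr0n.
have := quad (- (B a a + 1) / (2 * B a b)); rewrite bb0 mulr0 add0r.
have -> : 2 * (- (B a a + 1) / (2 * B a b)) * B a b = - (B a a + 1) by field.
lra.
Qed.

Section EuclideanSpace.
Context {R : realType} {d : nat}.
Implicit Types a b u v : 'rV[R]_d.

Definition dot a b : R := (a *m b^T) ord0 ord0.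

Lemma dotE a b : dot a b = \sum_i a ord0 i * b ord0 i.
Proof. by rewrite /dot mxE; apply: eq_bigr => i _; rewrite mxE. Qed.

Lemma dotC a b : dot a b = dot b a.
Proof. by rewrite !dotE; apply: eq_bigr => i _; rewrite mulrC. Qed.

Lemma dotDl a b v : dot (a + b) v = dot a v + dot b v.
Proof. by rewrite /dot mulmxDl mxE. Qed.

Lemma dotZl t a v : dot (t *: a) v = t * dot a v.
Proof. by rewrite /dot -scalemxAl mxE. Qed.

Lemma dotNl a v : dot (- a) v = - dot a v.
Proof. by rewrite -scaleN1r dotZl mulN1r. Qed.

Lemma dotBl a b v : dot (a - b) v = dot a v - dot b v.
Proof. by rewrite dotDl dotNl. Qed.

Lemma dotDr a b v : dot v (a + b) = dot v a + dot v b.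
Proof. by rewrite !(dotC v) dotDl. Qed.

Lemma dotZr t a v : dot v (t *: a) = t * dot v a.
Proof. by rewrite !(dotC v) dotZl. Qed.

Lemma dotNr a v : dot v (- a) = - dot v a.
Proof. by rewrite !(dotC v) dotNl. Qed.

Lemma dotBr a b v : dot v (a - b) = dot v a - dot v b.
Proof. by rewrite dotDr dotNr. Qed.

Lemma dot_ge0 v : 0 <= dot v v.
Proof. by rewrite dotE sumr_ge0 // => i _; rewrite -expr2 sqr_ge0. Qed.

Lemma enorm_dot v : enorm v = Num.sqrt (dot v v).
Proof. by rewrite dotE; congr Num.sqrt; apply: eq_bigr => i _; rewrite expr2. Qed.

Lemma enorm_ge0 v : 0 <= enorm v.
Proof. exact: sqrtr_ge0. Qed.

Lemma enorm_sqr v : enorm v ^+ 2 = dot v v.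
Proof. by rewrite enorm_dot sqr_sqrtr ?dot_ge0. Qed.

Lemma dot_le_enorm a b : dot a b <= enorm a * enorm b.
Proof.
rewrite !enorm_dot; apply: psd_form_CauchySchwarz => [||u]; last exact: dot_ge0.
  exact: dotC.
by move=> u v w t; rewrite dotDr dotZr.
Qed.

Lemma enormZ t v : enorm (t *: v) = `|t| * enorm v.
Proof.
by rewrite !enorm_dot dotZl dotZr mulrA -expr2 sqrtrM ?sqr_ge0 // sqrtr_sqr.
Qed.

Lemma enormD a b : enorm (a + b) <= enorm a + enorm b.
Proof.
rewrite -ler_sqr ?nnegrE ?addr_ge0 ?enorm_ge0 //.
rewrite enorm_sqr dotDl !dotDr (dotC b a) sqrrD !enorm_sqr.
have := dot_le_enorm a b; lra.
Qed.

Lemma enorm_eq0 v : (enorm v == 0) = (v == 0).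
Proof.
apply/idP/eqP => [|->]; last first.
  by rewrite enorm_dot dotE big1 ?sqrtr0 // => i _; rewrite mxE mul0r.
rewrite enorm_dot sqrtr_eq0 dotE => vv_le0; apply/rowP => i; rewrite mxE.
have vv0 : \sum_i v ord0 i * v ord0 i = 0.
  by apply/le_anti; rewrite vv_le0 sumr_ge0 // => j _; rewrite -expr2 sqr_ge0.
have /eqP : v ord0 i * v ord0 i = 0.
  by apply: (psumr_eq0P _ vv0) => // j _; rewrite -expr2 sqr_ge0.
by rewrite mulf_eq0 orbb => /eqP.
Qed.

Lemma enorm0 : enorm (0 : 'rV[R]_d) = 0.
Proof. by apply/eqP; rewrite enorm_eq0. Qed.

Lemma eball_convex (x0 p q : 'rV[R]_d) (r : \bar R) (t : R) :
  eball x0 r p -> eball x0 r q -> 0 <= t <= 1 -> eball x0 r (p + t *: (q - p)).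
Proof.
rewrite /eball /= => hp hq /andP[t0 t1].
have -> : p + t *: (q - p) - x0 = (1 - t) *: (p - x0) + t *: (q - x0).
  by apply/rowP => i; rewrite !mxE; ring.
have := enormD ((1 - t) *: (p - x0)) (t *: (q - x0)).
rewrite !enormZ !ger0_norm ?subr_ge0 // => le_conv.
case: r hp hq => [r| |] hp hq; last by rewrite leeNy_eq in hp.
  rewrite !lee_fin in hp hq *; apply: le_trans le_conv _; nra.
exact: leey.
Qed.

End EuclideanSpace.

Section DotFunctional.
Context {R : realType} {d : nat}.

Definition dotr (a v : 'rV[R]_d) : R := dot v a.

Fact dotr_is_linear a : linear (dotr a).
Proof. by move=> k u v; rewrite /dotr dotDl dotZl. Qed.

HB.instance Definition _ a :=
  GRing.isLinear.Build R 'rV[R]_d R *:%R (dotr a) (dotr_is_linear a).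

Lemma dotr_differentiable a x : differentiable (dotr a) x.
Proof.
have -> : dotr a = \sum_i ((fun v : 'rV[R]_d => v ord0 i) * cst (a ord0 i)).
  by apply/funext => v; rewrite fct_sumE /dotr dotE; apply: eq_bigr.
apply: differentiable_sum => i; apply: differentiableM => //.
exact: differentiable_coord.
Qed.

Lemma diff_dotr a x : 'd (dotr a) x = dotr a :> (_ -> _).
Proof.
by rewrite diff_lin // => y; exact/differentiable_continuous/dotr_differentiable.
Qed.

Variable V : normedModType R.

Lemma differentiable_dot_comp (G : V -> 'rV[R]_d) a p :
  differentiable G p -> differentiable (fun y => dot (G y) a) p.
Proof.
by move=> dG; apply: (@differentiable_comp _ _ _ _ G (dotr a)) => //;
  exact: dotr_differentiable.
Qed.

Lemma diff_dot_comp (G : V -> 'rV[R]_d) a p v :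
  differentiable G p -> 'd (fun y => dot (G y) a) p v = dot ('d G p v) a.
Proof.
move=> dG; rewrite -[fun y => _]/(dotr a \o G) diff_comp ?diff_dotr //.
exact: dotr_differentiable.
Qed.

End DotFunctional.

Section LineDerivative.
Context {R : realFieldType} {V W : normedModType R}.

Lemma is_derive_line (F : V -> W) p v t : differentiable F (p + t *: v) ->
  is_derive t 1 (fun s => F (p + s *: v)) ('d F (p + t *: v) v).
Proof.
move=> dF.
have E : (fun h : R => h^-1 *: (((fun s => F (p + s *: v)) \o shift t) (h *: 1)
            - F (p + t *: v)))
  = (fun h : R => h^-1 *: ((F \o shift (p + t *: v)) (h *: v) - F (p + t *: v))).
  apply/funext => h /=; congr (_ *: (F _ - _)).
  by rewrite scalerDl [h *: (1 : R)]mulr1 addrCA.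
apply: DeriveDef; first by rewrite /derivable E; exact: diff_derivable.
by rewrite /derive E; exact: deriveE.
Qed.

Lemma derive_right_quotient (phi : R -> R) : derivable phi 0 1 ->
  (fun t => t^-1 * (phi t - phi 0)) @ 0^'+ --> 'D_1 phi 0.
Proof.
move=> dphi; apply: cvg_dnbhs_at_right.
have -> : (fun t => t^-1 * (phi t - phi 0))
    = (fun h => h^-1 *: ((phi \o shift 0) (h *: 1) - phi 0)).
  by apply/funext => h /=; rewrite [h *: 1]mulr1 addr0.
exact: dphi.
Qed.

End LineDerivative.

Section Gradient.
Context {R : realType} {d : nat}.
Implicit Types (f : 'rV[R]_d -> R) (p q v x y z : 'rV[R]_d).

Lemma diff_grad f p v : differentiable f p -> 'd f p v = dot (grad f p) v.
Proof.
move=> df; rewrite {1}(row_sum_delta v) linear_sum dotE; apply: eq_bigr => j _.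
by rewrite linearZ /= -deriveE // /grad mxE mulrC.
Qed.

Lemma convex_first_order f p q : convex_fun f -> differentiable f p ->
  f p + dot (grad f p) (q - p) <= f q.
Proof.
move=> cf dfp; pose phi s := f (p + s *: (q - p)).
have dphi : is_derive (0 : R) (1 : R) phi (dot (grad f p) (q - p)).
  rewrite -diff_grad // -[X in 'd f X](addr0 p) -(scale0r (q - p)).
  by apply: is_derive_line; rewrite scale0r addr0.
suff : dot (grad f p) (q - p) <= f q - f p by lra.
rewrite -(@derive_val _ _ _ _ _ _ _ dphi).
apply: cvgr_to_le (derive_right_quotient (@ex_derive _ _ _ _ _ _ _ dphi)) _.
near=> t.
have t0 : 0 < t by near: t; exact: nbhs_right_gt.
have t1 : t < 1 by near: t; exact: nbhs_right_lt.
rewrite ler_pdivrMl // /phi scale0r addr0.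
have := cf q p t (ltW t0) (ltW t1).
have -> : t *: q + (1 - t) *: p = p + t *: (q - p).
  by apply/rowP => i; rewrite !mxE; ring.
lra.
Unshelve. all: by end_near. Qed.

Lemma convex_three_point f x y z :
  convex_fun f -> differentiable f x -> differentiable f z ->
  f x + dot (grad f z) (y - x) - dot (grad f x - grad f z) (x - z) <= f y.
Proof.
move=> cf dfx dfz.
have := convex_first_order z cf dfx; rewrite -(opprB x z) dotNr.
have := convex_first_order y cf dfz.
have -> : y - z = (y - x) + (x - z) by rewrite addrA subrK.
rewrite dotDr dotBl; lra.
Qed.

Lemma grad_monotone f p q :
  convex_fun f -> differentiable f p -> differentiable f q ->
  0 <= dot (grad f q - grad f p) (q - p).
Proof.
move=> cf dfp dfq; have := convex_three_point q cf dfq dfp.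
rewrite dotBr subrr; lra.
Qed.

Lemma diff_grad_hessian f p v : differentiable (grad f) p ->
  'd (grad f) p v = v *m (hessian f p)^T.
Proof.
move=> dG; apply/rowP => k.
rewrite {1}(row_sum_delta v) linear_sum summxE !mxE; apply: eq_bigr => j _.
rewrite linearZ /= !mxE; congr (_ * _).
have -> : (fun y => 'D_(ebasis k) f y) = fun y => grad f y ord0 k.
  by apply/funext => y; rewrite mxE.
by rewrite -deriveE // (derive_mx (@diff_derivable _ _ _ _ _ (ebasis j) dG)) mxE.
Qed.

Lemma hessian_quadE f p v : differentiable (grad f) p ->
  (v *m hessian f p *m v^T) ord0 ord0 = dot ('d (grad f) p v) v.
Proof.
move=> dG; rewrite diff_grad_hessian // /dot.
have -> : v *m hessian f p *m v^T = (v *m (hessian f p)^T *m v^T)^T.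
  by rewrite !trmx_mul !trmxK mulmxA.
by rewrite mxE.
Qed.

End Gradient.

Lemma differentiable_approx (R : realFieldType) (V W : normedModType R)
    (F : V -> W) p e :
  differentiable F p -> 0 < e -> exists2 del, 0 < del &
    forall r, `|r| < del -> `|F (p + r) - F p - 'd F p r| <= e * `|r|.
Proof.
move=> dF e0; have := diff_locally dF; set k := 'o _ => E.
have /(littleoP [littleo of k]) /nbhs_ballP [del del0 Hdel] := e0.
exists del => // r rdel.
have -> : F (p + r) - F p - 'd F p r = k r.
  have := congr1 (fun g => g r) E; rewrite /= addrC => ->.
  rewrite -[(_ + _ + k) r]/(F p + 'd F p r + k r).
  by rewrite -addrA -opprD [_ + k r]addrC addrK.
by apply: Hdel; rewrite -ball_normE /= sub0r normrN.
Qed.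

Section SymmetricSecondDifferential.
Context {R : realType} {V : normedModType R}.
Variables (f : V -> R) (p : V).
Hypothesis df : forall x, differentiable f x.

Definition second_difference (a b : V) (h : R) :=
  f (p + h *: (a + b)) - f (p + h *: a) - f (p + h *: b) + f p.

Lemma second_differenceC a b h : second_difference a b h = second_difference b a h.
Proof. by rewrite /second_difference (addrC a b); lra. Qed.

Lemma second_difference_mvt a b h : 0 < h -> exists2 c, 0 < c < h &
  second_difference a b h = h * ('d f (p + h *: b + c *: a) a - 'd f (p + c *: a) a).
Proof.
move=> h0; pose g s := f (p + h *: b + s *: a) - f (p + s *: a).
have dg (s : R) :
    is_derive s (1 : R) g ('d f (p + h *: b + s *: a) a - 'd f (p + s *: a) a).
  by apply: is_deriveB; apply: is_derive_line.
have [|c /[!in_itv]/= hc E] := MVT h0 (fun s _ => dg s).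
  apply: derivable_within_continuous => s _.
  exact: (@ex_derive _ _ _ _ _ _ _ (dg s)).
exists c => //; rewrite subr0 mulrC in E.
rewrite -E /g /second_difference !scale0r !addr0 scalerDr [h *: a + _]addrC addrA.
lra.
Qed.

Lemma second_difference_approx a b e :
  differentiable (fun y => 'd f y a) p -> 0 < e ->
  exists2 del, 0 < del & forall h, 0 < h < del ->
    `|second_difference a b h - h ^+ 2 * 'd (fun y => 'd f y a) p b| <= h ^+ 2 * e.
Proof.
move=> dDa e0; pose D := 'd (fun y => 'd f y a) p.
pose S := `|a| + `|b| + 1.
have na := normr_ge0 a; have nb := normr_ge0 b.
have S0 : 0 < S by rewrite /S; lra.
pose e' := e / (2 * S).
have e'0 : 0 < e' by rewrite divr_gt0 // mulr_gt0.
have [del del0 approx] := differentiable_approx dDa e'0.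
exists (del / S); first by rewrite divr_gt0.
move=> h /andP[h0]; rewrite ltr_pdivlMr // => hS.
(* The second difference is h times the increment of y |-> 'd f y a between
   p + r2 and p + r1, where r1 - r2 = h b and both r_i are O(h). *)
have [c /andP[c0 ch] ->] := second_difference_mvt a b h0.
set r1 := h *: b + c *: a; set r2 := c *: a.
have nr1 : `|r1| <= h * (`|a| + `|b|).
  by rewrite (le_trans (ler_normD _ _)) // !normrZ !gtr0_norm //; nra.
have nr2 : `|r2| <= h * `|a| by rewrite normrZ gtr0_norm // ler_wpM2r // ltW.
have [r1_del r2_del] : `|r1| < del /\ `|r2| < del by rewrite /S in hS; split; nra.
have -> : h * ('d f (p + h *: b + c *: a) a - 'd f (p + r2) a) - h ^+ 2 * D b
    = h * (('d f (p + r1) a - 'd f p a - D r1) - ('d f (p + r2) a - 'd f p a - D r2)).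
  have lin : D r1 = h * D b + D r2 by rewrite /r1 linearD linearZ.
  by rewrite -addrA lin; ring.
rewrite normrM gtr0_norm // expr2 -mulrA ler_pM2l //.
apply: le_trans (ler_normB _ _) _.
have := approx _ r1_del; have := approx _ r2_del; rewrite -/D => X2 X1.
have e'E : e' * (2 * S) = e by rewrite /e' divfK // mulf_neq0 // lt0r_neq0.
have : `|r1| + `|r2| <= h * (2 * S) by rewrite /S; nra.
move/(ler_wpM2l (ltW e'0)); rewrite mulrCA e'E mulrDr; lra.
Qed.

Lemma second_difference_cvg a b : differentiable (fun y => 'd f y a) p ->
  (fun h => h ^- 2 * second_difference a b h) @ 0^'+ --> 'd (fun y => 'd f y a) p b.
Proof.
move=> dDa; apply/cvgrPdist_le => e e0.
have [del del0 approx] := second_difference_approx b dDa e0.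
near=> h.
have h0 : 0 < h by near: h; exact: nbhs_right_gt.
have hdel : h < del by near: h; exact: nbhs_right_lt.
have h20 : 0 < h ^+ 2 by rewrite exprn_gt0.
rewrite -(ler_pM2l h20) -[X in X * `|_|]gtr0_norm // -normrM mulrBr mulrA.
by rewrite mulfV ?lt0r_neq0 // mul1r distrC; apply: approx; rewrite h0.
Unshelve. all: by end_near. Qed.

Lemma diff2_sym a b :
  differentiable (fun y => 'd f y a) p -> differentiable (fun y => 'd f y b) p ->
  'd (fun y => 'd f y a) p b = 'd (fun y => 'd f y b) p a.
Proof.
move=> dDa dDb; have lim_ab := @second_difference_cvg a b dDa.
have lim_ba := @second_difference_cvg b a dDb.
rewrite (funext (second_differenceC b a)) in lim_ba.
exact: (cvg_unique (@norm_hausdorff R R^o) lim_ab lim_ba).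
Qed.

End SymmetricSecondDifferential.

Section HessianForm.
Context {R : realType} {d : nat}.
Implicit Types (f : 'rV[R]_d -> R) (p a b v : 'rV[R]_d).

Lemma diff_grad_sym f p a b : (forall x, differentiable f x) ->
  differentiable (grad f) p -> dot ('d (grad f) p a) b = dot ('d (grad f) p b) a.
Proof.
move=> df dG.
have Dgrad c : (fun y => 'd f y c) = fun y => dot (grad f y) c.
  by apply/funext => y; rewrite diff_grad.
have dD c : differentiable (fun y => 'd f y c) p.
  by rewrite Dgrad; exact: differentiable_dot_comp.
by have := diff2_sym df (dD b) (dD a); rewrite !Dgrad !diff_dot_comp.
Qed.

Lemma diff_grad_psd f p v : convex_fun f -> (forall x, differentiable f x) ->
  differentiable (grad f) p -> 0 <= dot ('d (grad f) p v) v.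
Proof.
move=> cf df dG; pose psi s := dot (grad f (p + s *: v)) v.
have dpsi : is_derive (0 : R) (1 : R) psi (dot ('d (grad f) p v) v).
  rewrite -diff_dot_comp // -[X in 'd _ X](addr0 p) -(scale0r v).
  by apply: is_derive_line; rewrite scale0r addr0; exact: differentiable_dot_comp.
rewrite -(@derive_val _ _ _ _ _ _ _ dpsi).
apply: cvgr_to_ge (derive_right_quotient (@ex_derive _ _ _ _ _ _ _ dpsi)) _.
near=> t.
have t0 : 0 < t by near: t; exact: nbhs_right_gt.
rewrite pmulr_rge0 ?invr_gt0 // /psi scale0r addr0 -dotBl.
have := grad_monotone cf (df p) (df (p + t *: v)).
have -> : p + t *: v - p = t *: v by rewrite addrC addKr.
by rewrite dotZr pmulr_rge0.
Unshelve. all: by end_near. Qed.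

Lemma diff_grad_le f p (L : R) a b : convex_fun f -> (forall x, differentiable f x) ->
  differentiable (grad f) p -> loewner_le_scalar (hessian f p) L -> 0 <= L ->
  dot ('d (grad f) p a) b <= L * enorm a * enorm b.
Proof.
move=> cf df dG hL L0.
have quad_le v : Num.sqrt (dot ('d (grad f) p v) v) <= Num.sqrt L * enorm v.
  rewrite -[enorm v]ger0_norm ?enorm_ge0 // -sqrtr_sqr -sqrtrM // ler_sqrt.
    by rewrite -hessian_quadE //; exact: hL.
  by rewrite mulr_ge0 ?sqr_ge0.
apply: le_trans
  (@psd_form_CauchySchwarz _ _ (fun u w => dot ('d (grad f) p u) w) _ _ _ a b) _.
- by move=> u w; exact: diff_grad_sym.
- by move=> u w z t; rewrite dotDr dotZr.
- by move=> u; exact: diff_grad_psd.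
have := ler_pM (sqrtr_ge0 _) (sqrtr_ge0 _) (quad_le a) (quad_le b).
by rewrite mulrACA -expr2 sqr_sqrtr // mulrA.
Qed.

End HessianForm.

Section LocallySmoothConvex.
Context {R : realType} {d : nat}.
Variables (f : 'rV[R]_d -> R) (x0 : 'rV[R]_d) (M : \bar R) (L : R).
Hypotheses (cf : convex_fun f) (df : forall x, differentiable f x).
Hypothesis dG : forall x, eball x0 M x -> differentiable (grad f) x.
Hypothesis hL : forall x, eball x0 M x -> loewner_le_scalar (hessian f x) L.
Hypothesis L0 : 0 <= L.

Lemma grad_lipschitz p q : eball x0 M p -> eball x0 M q ->
  enorm (grad f q - grad f p) <= L * enorm (q - p).
Proof.
move=> hp hq; set w := q - p; set e := grad f q - grad f p.
pose u t := dot (grad f (p + t *: w)) e.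
have du (t : R) : 0 <= t <= 1 ->
    is_derive t (1 : R) u (dot ('d (grad f) (p + t *: w) w) e).
  move=> /(eball_convex hp hq); rewrite -/w => ht.
  rewrite -diff_dot_comp; last exact: dG.
  by apply: is_derive_line; exact/differentiable_dot_comp/dG.
have [] := @MVT _ u (fun t => dot ('d (grad f) (p + t *: w) w) e) 0 1 ltr01 _ _.
- by move=> s /[!in_itv]/= /andP[s0 s1]; apply: du; rewrite !ltW.
- apply: derivable_within_continuous => s /[!in_itv]/= hs.
  exact: (@ex_derive _ _ _ _ _ _ _ (du s hs)).
move=> c /[!in_itv]/= /andP[c0 c1].
have hc : eball x0 M (p + c *: w) by apply: eball_convex; rewrite ?ltW.
rewrite /u scale0r addr0 scale1r subr0 mulr1 -dotBl.
have -> : p + w = q by rewrite /w addrC subrK.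
rewrite -/e -enorm_sqr => sqr_e.
have := diff_grad_le w e cf df (dG hc) (hL hc) L0; rewrite -sqr_e.
have [e_gt0|e_le0] := ltP 0 (enorm e); first by rewrite expr2 ler_pM2r.
by move=> _; apply: le_trans e_le0 _; rewrite mulr_ge0 ?enorm_ge0.
Qed.

Variable lam : R.

Lemma envelope_gap_ge x y mu : eball x0 M x ->
  L * enorm (x - x0) <= lam - enorm (grad f x0) -> 0 <= mu <= 1 ->
  mu * (lam - enorm (grad f x0)) * (enorm (x - y) - mu * enorm (x - x0))
    <= f y + lam * enorm (x - y) - f x.
Proof.
move=> hx hr /andP[mu0 mu1].
set w := x - x0; set rho := enorm w; set s := enorm (x - y).
have rho0 : 0 <= rho := enorm_ge0 w.
have s0 : 0 <= s := enorm_ge0 (x - y).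
pose z := x0 + (1 - mu) *: w.
have hx0 : eball x0 M x0.
  by rewrite /eball /= subrr enorm0; apply: le_trans hx; rewrite lee_fin enorm_ge0.
have hz : eball x0 M z by apply: eball_convex => //; apply/andP; split; lra.
have zx0 : z - x0 = (1 - mu) *: w by rewrite /z addrAC subrr add0r.
have xz : x - z = mu *: w by apply/rowP => i; rewrite !mxE; ring.
have Nz : enorm (grad f z) <= enorm (grad f x0) + L * ((1 - mu) * rho).
  have := enormD (grad f x0) (grad f z - grad f x0).
  rewrite [grad f x0 + _]addrC subrK.
  have := grad_lipschitz hx0 hz.
  rewrite zx0 enormZ ger0_norm ?subr_ge0 // -/rho; lra.
have Nxz : enorm (grad f x - grad f z) <= L * (mu * rho).
  by have := grad_lipschitz hz hx; rewrite xz enormZ ger0_norm.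
have three := convex_three_point y cf (df x) (df z).
have CS1 : - (enorm (grad f z) * s) <= dot (grad f z) (y - x).
  by rewrite -[y - x]opprB dotNr lerN2 dot_le_enorm.
have CS2 :
    dot (grad f x - grad f z) (x - z) <= enorm (grad f x - grad f z) * (mu * rho).
  have := dot_le_enorm (grad f x - grad f z) (x - z).
  by rewrite xz enormZ ger0_norm.
have P1 := ler_wpM2r s0 Nz.
have P2 := ler_wpM2r (mulr_ge0 mu0 rho0) Nxz.
have nmu0 : 0 <= 1 - mu by rewrite subr_ge0.
have P3 := ler_wpM2r (mulr_ge0 nmu0 s0) hr.
have P4 := ler_wpM2r (mulr_ge0 mu0 (mulr_ge0 mu0 rho0)) hr.
rewrite -/rho in P3 P4; nra.
Qed.

Lemma envelope_strict_min x y : eball x0 M x ->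
  L * enorm (x - x0) <= lam - enorm (grad f x0) -> enorm (grad f x0) < lam ->
  y != x -> f x < f y + lam * enorm (x - y).
Proof.
move=> hx hr lam_gt yx.
set rho := enorm (x - x0); set s := enorm (x - y).
have rho0 : 0 <= rho := enorm_ge0 _.
have s0 : 0 < s by rewrite lt_def enorm_ge0 andbT enorm_eq0 subr_eq0 eq_sym.
pose mu := s / (s + rho).
have mu0 : 0 < mu by rewrite divr_gt0 // ltr_wpDr.
have mu1 : mu <= 1 by rewrite ler_pdivrMr ?mul1r ?ler_wpDr // ltr_wpDr.
have mu_rho : mu * rho < s.
  by rewrite /mu mulrAC ltr_pdivrMr ?ltr_pM2l //; lra.
have := envelope_gap_ge y hx hr (andb_true_intro (conj (ltW mu0) mu1)).
rewrite -/rho -/s.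
have : 0 < mu * (lam - enorm (grad f x0)) * (s - mu * rho).
  by apply: mulr_gt0; [apply: mulr_gt0|]; rewrite // subr_gt0.
lra.
Qed.

End LocallySmoothConvex.

Lemma strict_min_inf_argmin (R : realType) (T : eqType) (F : T -> R) x :
  (forall y, y != x -> F x < F y) ->
  F x = inf (range F) /\ [set y | forall z, F y <= F z] = [set x].
Proof.
move=> Fmin; have Fx_le y : F x <= F y.
  by have [->|yx] := eqVneq y x; [exact: lexx | exact/ltW/Fmin].
split.
  apply/le_anti/andP; split.
    by apply: lb_le_inf => [|_ [y _ <-]]; [exists (F x), x|].
  by apply: ge_inf; [exists (F x) => _ [y _ <-] | exists x].
apply/seteqP; split => y /=; last by move=> -> z.
by move=> Fy_min; apply/eqP/contraT => /Fmin; rewrite ltNge Fy_min.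
Qed.

Theorem lemmaE3 (R : realType) (d : nat) (f : 'rV[R]_d -> R)
  (x0 : 'rV[R]_d) (M : \bar R) (L lam : R) :
  convex_fun f ->
  (forall x, differentiable f x) ->
  (forall x, eball x0 M x -> differentiable (grad f) x) ->
  (forall x, eball x0 M x -> loewner_le_scalar (hessian f x) L) ->
  (0 < M)%E -> 0 < L ->
  enorm (grad f x0) < lam ->
  forall x, eball x0 (Order.min ((lam - enorm (grad f x0)) / L)%:E M) x ->
    f x = inf (range (fun y => f y + lam * enorm (x - y))) /\
    [set y | forall z, f y + lam * enorm (x - y) <= f z + lam * enorm (x - z)]
      = [set x].
Proof.
move=> cf df dG hL _ L_gt0 lam_gt x.
rewrite /eball /= le_min lee_fin ler_pdivlMr // mulrC => /andP[hr hx].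
have := @strict_min_inf_argmin _ _ (fun y => f y + lam * enorm (x - y)) x.
rewrite /= subrr enorm0 mulr0 addr0; apply => y.
exact: (envelope_strict_min cf df dG hL (ltW L_gt0) hx hr lam_gt).
Qed.
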